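(* There is a constant $\varepsilon_0\in(0,1)$ such that for every constant $\varepsilon\in(0,\varepsilon_0)$ the following holds. Consider the NSGA-II with population size $N=n+1$ optimizing \textsc{OneMinMax}, where the offspring population is generated by applying one-bit mutation once to each individual of $P_t$. If $|f(P_t)|\le(1-\varepsilon)(n+1)$, then, conditional on $P_t$, with probability at least $1-\exp(-\Omega(n))$ (the implicit constant depending only on $\varepsilon$, and $n$ sufficiently large), $$|f(R_t)|\le\left(1-\tfrac{1}{10}\varepsilon\left(\tfrac15\varepsilon-\tfrac2n\right)^{5/\varepsilon}\right)(n+1).$$
   Context: Search space $\{0,1\}^n$; objective $f=(f_1,f_2)$, both maximized. Populations are multisets of bit strings; for a population $P$, $f(P)=\{f(x):x\in P\}$. In iteration $t$ of the NSGA-II, $P_t$ is the parent population of size $N$, $Q_t$ the offspring population of size $N$ (here: one offspring of each individual of $P_t$, created independently by one-bit mutation, which flips exactly one uniformly random bit), and $R_t=P_t\cup Q_t$ (multiset union). \textsc{OneMinMax}: $f(x)=(n-\sum_{i=1}^n x_i,\ \sum_{i=1}^n x_i)$; its Pareto front is $\{(k,n-k):k\in\{0,\dots,n\}\}$, of size $n+1$. *)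

From Stdlib Require Import Reals.
From mathcomp Require Import all_boot.
Set Implicit Arguments. Unset Strict Implicit. Unset Printing Implicit Defensive.

Definition bits (n : nat) := {ffun 'I_n -> bool}.

Definition ones n (x : bits n) : nat := #|[set i | x i]|.

Definition oneminmax n (x : bits n) : nat * nat := (n - ones x, ones x).

Definition flip n (x : bits n) (i : 'I_n) : bits n :=
  [ffun j => if j == i then ~~ x j else x j].

(* A population of size N = n+1 (multiset, indexed by positions). *)
Definition population n := {ffun 'I_(n.+1) -> bits n}.

(* The random choices of one-bit mutation: for each parent, the flipped bit. *)
Definition mutchoice n := {ffun 'I_(n.+1) -> 'I_n}.

Definition offspring n (P : population n) (m : mutchoice n) : population n :=
  [ffun k => flip (P k) (m k)].

Definition pop_seq n (P : population n) : seq (bits n) :=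
  [seq P k | k <- enum 'I_(n.+1)].

Definition nfvals n (s : seq (bits n)) : nat := size (undup (map (@oneminmax n) s)).

Definition nfvals_R n (P : population n) (m : mutchoice n) : nat :=
  nfvals (pop_seq P ++ pop_seq (offspring P m)).

Definition prob (T : finType) (E : pred T) : R := Rdiv (INR #|E|) (INR #|T|).

Definition Rleb (a b : R) : bool := if Rle_dec a b then true else false.

(** Call the number of ones of an individual its level: the objective values of a
    population correspond to its occupied levels.  An empty level [v] of [P_t] stays empty
    in [R_t] when every parent on level [v - 1] flips a one and every parent on level
    [v + 1] flips a zero.  If [v] is at distance more than [a] from [0] and [n] and has at
    most [M] such neighbours, this happens with probability at least [(a/n)^M], and for
    levels in one residue class {0,1} or {2,3} mod 4 the neighbourhoods are disjoint, so
    these events are independent.  Few empty levels are near the ends, and few have more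
    than [M] neighbours since the levels of the [n + 1] parents are counted twice at most;
    so a constant fraction of the [eps (n + 1)] empty levels are candidates of one class.
    Markov's inequality applied to [2^-(number of events occurring)] then shows that
    outside probability [exp (- Omega (n))] a constant fraction of them stay empty. *)

From Stdlib Require Import Reals Lra Lia ZArith.
From mathcomp Require Import all_boot zify Rstruct.
(* Imported after [Rstruct], so that [Rleb] denotes [Defs.Rleb] and not [Rstruct.Rleb]. *)
From Pilot Require Import Defs.
Set Implicit Arguments.
Unset Strict Implicit.
Unset Printing Implicit Defensive.
Local Open Scope R_scope.

Lemma big_Rplus_const (I : finType) (A : {pred I}) (c : R) :
  \big[Rplus/0]_(i in A) c = INR #|A| * c.
Proof.
rewrite big_const; elim: #|A| => [|k IH]; first by rewrite /= Rmult_0_l.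
by rewrite iterS IH S_INR; ring.
Qed.

Lemma big_Rmult_const (I : finType) (A : {pred I}) (c : R) :
  \big[Rmult/1]_(i in A) c = c ^ #|A|.
Proof. by rewrite big_const; elim: #|A| => [|k IH] //=; rewrite IH. Qed.

Lemma Rsum_le (I : finType) (F G : I -> R) :
  (forall i, F i <= G i) -> \big[Rplus/0]_i F i <= \big[Rplus/0]_i G i.
Proof. by move=> FG; apply: (big_ind2 Rle) => // *; [lra | apply: Rplus_le_compat]. Qed.

Lemma Rprod_le (I : Type) (r : seq I) (P : pred I) (F G : I -> R) :
  (forall i, P i -> 0 <= F i <= G i) ->
  \big[Rmult/1]_(i <- r | P i) F i <= \big[Rmult/1]_(i <- r | P i) G i.
Proof.
move=> FG; apply: (proj2 (big_ind2 (fun x y => 0 <= x <= y) _ _ FG)); first lra.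
by move=> x1 x2 y1 y2 [? ?] [? ?]; split; [apply: Rmult_le_pos | apply: Rmult_le_compat].
Qed.

Lemma pow_decr (b : R) (m n : nat) : 0 <= b <= 1 -> (m <= n)%N -> b ^ n <= b ^ m.
Proof.
move=> b01 mn; rewrite -(subnK mn) pow_add.
have := pow_incr b 1 (n - m) b01; have := pow_le b m (proj1 b01); rewrite pow1; nra.
Qed.

Lemma INR_muln (m d : nat) : INR (m * d)%N = INR m * INR d.
Proof. exact: mult_INR. Qed.

Lemma INR_prod (I : finType) (c : I -> nat) :
  INR (\prod_i c i)%N = \big[Rmult/1]_i INR (c i).
Proof. exact: (big_morph INR INR_muln). Qed.

Lemma sum_if (T : finType) (E : pred T) (x y : R) :
  \big[Rplus/0]_f (if E f then x else y) = INR #|E| * x + INR #|[predC E]| * y.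
Proof.
rewrite -!big_Rplus_const (bigID E) /=.
by congr Rplus; apply: eq_bigr => f; case: (E f).
Qed.

Lemma ratio_le (a c n : nat) : (0 < n)%N -> (a <= c)%N -> 0 <= INR a / INR n <= INR c / INR n.
Proof.
move=> n0 ac; have ninv := Rlt_le _ _ (Rinv_0_lt_compat _ (lt_0_INR _ (elimT ltP n0))).
split; first exact/Rmult_le_pos/ninv/pos_INR.
by apply/Rmult_le_compat_r/le_INR/leP.
Qed.

Lemma ratio_bounds (a n : nat) : (0 < n)%N -> (a <= n)%N -> 0 <= INR a / INR n <= 1.
Proof.
move=> n0 an; have := ratio_le n0 an; rewrite /Rdiv Rinv_r //.
by apply: not_0_INR; lia.
Qed.

Lemma exp_INR_mul (k : nat) (x : R) : exp (INR k * x) = exp x ^ k.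
Proof.
elim: k => [|k IH]; first by rewrite /= Rmult_0_l exp_0.
by rewrite S_INR Rmult_plus_distr_r Rmult_1_l exp_plus IH /= Rmult_comm.
Qed.

Lemma pow2_pow_le_exp (x : R) (k m : nat) :
  0 <= x <= 1 -> 2 ^ k * (1 - x) ^ m <= exp (INR k - INR m * x).
Proof.
move=> x01; rewrite /Rminus exp_plus Ropp_mult_distr_r -[INR k]Rmult_1_r !exp_INR_mul.
have := exp_ineq1 1 ltac:(lra); have := exp_ineq1_le (- x) => ? ?.
by apply: Rmult_le_compat; try apply: pow_le; try apply: pow_incr; lra.
Qed.

Lemma exp_le (x y : R) : x <= y -> exp x <= exp y.
Proof. by case/Rle_lt_or_eq_dec => [/exp_increasing/Rlt_le|->]; [|right]. Qed.

Lemma INR_subn_ge (m d : nat) : INR m - INR d <= INR (m - d).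
Proof.
case: (leqP d m) => dm; first by rewrite minus_INR; [lra | apply/leP].
have := pos_INR (m - d); have : INR m <= INR d by apply/le_INR/leP/ltnW.
lra.
Qed.

Definition floorn (x : R) : nat := Z.to_nat (Int_part x).

Lemma floorn_spec (x : R) : 0 <= x -> INR (floorn x) <= x < INR (floorn x) + 1.
Proof.
move=> x0; have [le_x gt_x] := base_Int_part x.
have int_gt : (-1 < Int_part x)%Z by apply: lt_IZR; lra.
by rewrite /floorn INR_IZR_INZ Z2Nat.id; [lra | lia].
Qed.

Lemma bernoulli_ineq (x : R) (m : nat) : 0 <= x -> 1 + INR m * x <= (1 + x) ^ m.
Proof.
move=> x0; elim: m => [|m IH]; first by rewrite /= Rmult_0_l; lra.
rewrite S_INR /=; have := pos_INR m; nra.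
Qed.

Lemma Rpower_le_pow (q y : R) (m : nat) : 0 < q < 1 -> INR m <= y -> Rpower q y <= q ^ m.
Proof.
move=> [q0 q1] my; rewrite -Rpower_pow // /Rpower; apply: exp_le.
have : ln q < 0 by rewrite -ln_1; apply: ln_increasing.
nra.
Qed.

Lemma eventually_le_mul (c x : R) : 0 < c -> exists n0, forall n, (n0 <= n)%N -> x <= c * INR n.
Proof.
move=> c0; exists (floorn (Rmax 0 (x / c))).+1 => n n0n.
have [_ fl] := floorn_spec (Rmax_l 0 (x / c)).
have : INR (floorn (Rmax 0 (x / c))).+1 <= INR n by apply/le_INR/leP.
have : x / c <= Rmax 0 (x / c) by apply: Rmax_r.
have : c * (x / c) = x by field; lra.
rewrite S_INR; nra.
Qed.

Lemma Rleb_true (a b : R) : a <= b -> Rleb a b.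
Proof. by rewrite /Rleb; case: Rle_dec. Qed.

Section UniformProbability.
Variable T : finType.
Hypothesis T_gt0 : (0 < #|T|)%N.

Definition mean (G : T -> R) := \big[Rplus/0]_(f : T) G f / INR #|T|.

Lemma INR_card_gt0 : 0 < INR #|T|.
Proof. exact/lt_0_INR/ltP. Qed.

Lemma prob_le1 (E : pred T) : prob E <= 1.
Proof.
have T0 := INR_card_gt0; have : INR #|E| <= INR #|T| by apply/le_INR/leP/max_card.
rewrite /prob => ?; apply: (Rmult_le_reg_r (INR #|T|)) => //.
by rewrite /Rdiv Rmult_assoc Rinv_l; lra.
Qed.

Lemma prob_le (E F : pred T) : (forall f, E f -> F f) -> prob E <= prob F.
Proof.
move=> EF; apply: Rmult_le_compat_r; first exact/Rlt_le/Rinv_0_lt_compat/INR_card_gt0.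
by apply/le_INR/leP/subset_leq_card/subsetP => f; rewrite !unfold_in; apply: EF.
Qed.

Lemma prob_ge_compl (E B : pred T) : (forall f, ~~ B f -> E f) -> 1 - prob B <= prob E.
Proof.
move=> BE; have T0 := INR_card_gt0.
have : (#|T| <= #|B| + #|E|)%N.
  rewrite -(cardC B) leq_add2l; apply/subset_leq_card/subsetP => f.
  by rewrite !unfold_in; apply: BE.
move/leP/le_INR; rewrite plus_INR /prob => TBE.
have -> : 1 - INR #|B| / INR #|T| = (INR #|T| - INR #|B|) / INR #|T| by field; lra.
by apply: Rmult_le_compat_r; [exact/Rlt_le/Rinv_0_lt_compat | lra].
Qed.

Lemma markov_mean (E : pred T) (G : T -> R) (c : R) :
  (forall f, 0 <= G f) -> (forall f, E f -> c <= G f) -> c * prob E <= mean G.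
Proof.
move=> G0 EG; have T0 := INR_card_gt0.
have -> : c * prob E = \big[Rplus/0]_(f in E) c / INR #|T|.
  by rewrite big_Rplus_const /prob /Rdiv; ring.
apply: Rmult_le_compat_r; first exact/Rlt_le/Rinv_0_lt_compat.
rewrite big_mkcond; apply: Rsum_le => f; rewrite unfold_in.
by case: (boolP (E f)) => [/EG|].
Qed.

Lemma eq_mean (G H : T -> R) : G =1 H -> mean G = mean H.
Proof. by move=> GH; rewrite /mean; under eq_bigr do rewrite GH. Qed.

Lemma mean_cst (c : R) : mean (fun=> c) = c.
Proof.
have T0 := INR_card_gt0; rewrite /mean big_Rplus_const.
rewrite (_ : #|xpredT| = #|T|); last exact: eq_card.
by field; lra.
Qed.

Lemma mean_halve (E : pred T) : mean (fun f => if E f then / 2 else 1) = 1 - prob E / 2.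
Proof.
have T0 := INR_card_gt0.
by rewrite /mean /prob sum_if -(cardC E) plus_INR in T0 *; field; lra.
Qed.

Lemma mean_mul (G H : T -> R) :
  \big[Rplus/0]_f (G f * H f) * INR #|T| = \big[Rplus/0]_f G f * \big[Rplus/0]_f H f ->
  mean (fun f => G f * H f) = mean G * mean H.
Proof.
have T0 := INR_card_gt0; rewrite /mean => sumGH.
have -> : forall a b, a / INR #|T| * (b / INR #|T|) = a * b / INR #|T| / INR #|T|.
  by move=> a b; field; lra.
by rewrite -sumGH; field; lra.
Qed.

End UniformProbability.

Section ProductSpace.
Variables I J : finType.
Hypothesis J_gt0 : (0 < #|J|)%N.
Local Notation T := {ffun I -> J}.

Lemma card_ffun_gt0 : (0 < #|T|)%N.
Proof. by rewrite card_ffun expn_gt0 J_gt0. Qed.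

Definition depends_on {X : Type} (S : {set I}) (G : T -> X) :=
  forall f g : T, {in S, f =1 g} -> G f = G g.

Definition splice (S : {set I}) (f g : T) : T := [ffun i => if i \in S then f i else g i].

Lemma sum_mul_indep (S : {set I}) (G H : T -> R) :
  depends_on S G -> depends_on (~: S) H ->
  \big[Rplus/0]_f (G f * H f) * INR #|T| =
  \big[Rplus/0]_f G f * \big[Rplus/0]_f H f.
Proof.
move=> dG dH.
pose swap (p : T * T) := (splice S p.1 p.2, splice S p.2 p.1).
have swapK : involutive swap.
  by case=> f g; congr pair; apply/ffunP => i; rewrite !ffunE; case: (i \in S).
have splice_spliced f g : splice S (splice S f g) (splice S g f) = f.
  by apply/ffunP => i; rewrite !ffunE; case: (i \in S).
symmetry; rewrite big_distrl /=; under eq_bigr do rewrite big_distrr /=.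
rewrite pair_big /=.
transitivity (\big[Rplus/0]_(p : T * T) (G (splice S p.1 p.2) * H (splice S p.1 p.2))).
  apply: eq_bigr => [[f g]] _ /=; congr Rmult.
    by apply: dG => i iS; rewrite ffunE iS.
  by apply: dH => i; rewrite inE => /negbTE iS; rewrite ffunE iS.
rewrite (reindex_inj (can_inj swapK)) /=.
under eq_bigr => p _ do rewrite splice_spliced.
rewrite -(pair_big xpredT xpredT (fun f _ : T => G f * H f)) /=.
by rewrite big_distrl /=; apply: eq_bigr => f _; rewrite big_Rplus_const Rmult_comm.
Qed.

Lemma mean_mul_indep (S : {set I}) (G H : T -> R) :
  depends_on S G -> depends_on (~: S) H ->
  mean (fun f => G f * H f) = mean G * mean H.
Proof. by move=> dG dH; apply: (mean_mul card_ffun_gt0); exact: sum_mul_indep dG dH. Qed.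

Lemma mean_prod_indep (K : eqType) (s : seq K) (S : K -> {set I}) (Y : K -> T -> R) :
  uniq s -> (forall k, depends_on (S k) (Y k)) ->
  {in s &, forall k l, k != l -> [disjoint S k & S l]} ->
  mean (fun f => \big[Rmult/1]_(k <- s) Y k f) = \big[Rmult/1]_(k <- s) mean (Y k).
Proof.
move=> + dY; elim: s => [|k s IH] /= => [_ _ | /andP [ks Us] dis].
  rewrite big_nil -[RHS](mean_cst card_ffun_gt0 1).
  by apply: eq_mean => f; rewrite big_nil.
rewrite big_cons -IH //; last by move=> k1 l1 k1s l1s; apply: dis; rewrite inE ?k1s ?l1s orbT.
rewrite -(mean_mul_indep (dY k)); first by apply: eq_mean => f; rewrite big_cons.
move=> f g fg; apply: eq_big_seq => l ls.
apply: dY => i il; apply: fg; rewrite inE; apply/negP => ik.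
have kl : k != l by apply: contraNneq ks => ->.
by rewrite (disjointFr (dis k l _ _ kl) ik) in il; rewrite ?inE ?eqxx ?ls ?orbT.
Qed.

Lemma prob_family (F : I -> pred J) :
  prob (fun f : T => [forall i, F i (f i)]) = \big[Rmult/1]_i (INR #|F i| / INR #|J|).
Proof.
have J0 : INR #|J| <> 0 by apply/not_0_INR; lia.
rewrite /prob; have -> : #|fun f : T => [forall i, F i (f i)]| = (\prod_i #|F i|)%N.
  transitivity #|family F|; first by apply: eq_card => f; apply/forallP/familyP.
  by rewrite card_family foldrE big_map big_enum.
rewrite card_ffun -prod_nat_const !INR_prod big_split /=; congr Rmult.
by rewrite (big_morph Rinv Rinv_mult Rinv_1).
Qed.

Lemma prob_few_events (K : finType) (V : {set K}) (S : K -> {set I}) (A : K -> pred T)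
    (p : R) (k : nat) :
  (forall v, depends_on (S v) (A v)) ->
  {in V &, forall v w, v != w -> [disjoint S v & S w]} ->
  {in V, forall v, p <= prob (A v)} ->
  prob (fun f => #|[set v in V | A v f]| < k)%N <= 2 ^ k * (1 - p / 2) ^ #|V|.
Proof.
move=> dA dis pA; have T0 := card_ffun_gt0.
pose Y v f := if A v f then / 2 else 1.
pose Z f := \big[Rmult/1]_(v <- enum V) Y v f.
(* Markov's inequality for [Z = 2^-(number of events)], whose mean factorises. *)
have Z_count f : Z f = (/ 2) ^ #|[set v in V | A v f]|.
  rewrite /Z big_enum big_mkcond -big_Rmult_const [RHS]big_mkcond /=.
  by apply: eq_bigr => v _; rewrite inE /Y; case: (v \in V); case: (A v f).
have meanZ : mean Z <= (1 - p / 2) ^ #|V|.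
  rewrite (mean_prod_indep (S := S) (Y := Y) (enum_uniq V)) => [||v w]; last first.
  - by rewrite !mem_enum; apply: dis.
  - by move=> v f g fg; rewrite /Y (dA v f g fg).
  rewrite -big_Rmult_const big_enum; apply: Rprod_le => v vV.
  have := pA v vV; have := prob_le1 T0 (A v); rewrite mean_halve //; lra.
have few_Z : (/ 2) ^ k * prob (fun f => #|[set v in V | A v f]| < k)%N <= mean Z.
  apply: markov_mean => // f; rewrite Z_count; first by apply: pow_le; lra.
  by move=> few; apply: pow_decr; [lra | apply: ltnW].
have pow2K : 2 ^ k * (/ 2) ^ k = 1 by rewrite -Rpow_mult_distr Rinv_r ?pow1.
have := Rmult_le_compat_l (2 ^ k) _ _ (pow_le 2 k ltac:(lra)) (Rle_trans _ _ _ few_Z meanZ).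
by rewrite -Rmult_assoc pow2K Rmult_1_l.
Qed.

End ProductSpace.

Lemma exists_half_uniform (T : finType) (C : {set T}) (B : pred T) :
  exists V : {set T},
    [/\ V \subset C, (#|C| <= 2 * #|V|)%N & {in V &, forall x y, B x = B y}].
Proof.
have := cardsID [set x | B x] C; case: (leqP #|C :\: [set x | B x]| #|C :&: [set x | B x]|).
- exists (C :&: [set x | B x]); split; [exact: subsetIl | lia |].
  by move=> x y; rewrite !inE => /andP [_ ->] /andP [_ ->].
- exists (C :\: [set x | B x]); split; [exact: subsetDl | lia |].
  by move=> x y; rewrite !inE => /andP [/negbTE -> _] /andP [/negbTE -> _].
Qed.

Lemma card_ord_le (n a : nat) : (#|[set v : 'I_n.+1 | (v <= a)%N]| <= a.+1)%N.
Proof.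
rewrite cardE -(size_map val) -[X in (_ <= X)%N](size_iota 0 a.+1).
apply: uniq_leq_size; first by rewrite (map_inj_uniq val_inj) enum_uniq.
by move=> x /mapP [v]; rewrite mem_enum inE => va ->; rewrite mem_iota /=; lia.
Qed.

Lemma card_ord_ge (n a : nat) : (#|[set v : 'I_n.+1 | (n <= v + a)%N]| <= a.+1)%N.
Proof.
rewrite cardE -(size_map (fun v : 'I_n.+1 => n - v)%N) -[X in (_ <= X)%N](size_iota 0 a.+1).
apply: uniq_leq_size.
  rewrite map_inj_in_uniq ?enum_uniq // => x y; rewrite !mem_enum !inE => _ _ e.
  by apply: ord_inj; have := ltn_ord x; have := ltn_ord y; lia.
by move=> x /mapP [v]; rewrite mem_enum inE => va ->; rewrite mem_iota /=; lia.
Qed.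

Lemma ones_le n (x : bits n) : (ones x <= n)%N.
Proof. by rewrite -[X in (_ <= X)%N]card_ord max_card. Qed.

Lemma ones_flip n (x : bits n) i :
  ones (flip x i) = if x i then (ones x).-1 else (ones x).+1.
Proof.
rewrite /ones; case xi: (x i).
- have -> : [set j | flip x i j] = [set j | x j] :\ i.
    by apply/setP => j; rewrite !inE ffunE; case: (eqVneq j i) => [->|]; rewrite ?xi.
  by rewrite [in RHS](cardsD1 i) inE xi.
- have -> : [set j | flip x i j] = i |: [set j | x j].
    by apply/setP => j; rewrite !inE ffunE; case: (eqVneq j i) => [->|]; rewrite ?xi.
  by rewrite cardsU1 inE xi.
Qed.

Section Population.
Variables (n : nat) (P : population n).

Definition level (j : 'I_n.+1) := ones (P j).

Definition level_count (w : nat) := #|[set j | level j == w]|.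

Definition occupied (w : nat) := [exists j, level j == w].

Definition neighbours (v : nat) := [set j | (level j == v.-1) || (level j == v.+1)].

Definition moves_away (v : nat) (j : 'I_n.+1) (i : 'I_n) :=
  ((level j == v.-1) ==> P j i) && ((level j == v.+1) ==> ~~ P j i).

Definition avoids (v : nat) (m : mutchoice n) := [forall j, moves_away v j (m j)].

Lemma offspring_avoids v m j : (0 < v)%N -> avoids v m -> ones (offspring P m j) != v.
Proof.
move=> v0 /forallP /(_ j) /andP [below above].
rewrite /offspring ffunE ones_flip; apply/eqP; case Pj: (P j (m j)) => lv.
- have : (0 < ones (P j))%N by apply/card_gt0P; exists (m j); rewrite inE.
  by move: above; rewrite Pj implybF /level => /eqP; lia.
- by move: below; rewrite Pj implybF /level => /eqP; lia.
Qed.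

Lemma avoids_depends v : depends_on (neighbours v) (avoids v).
Proof.
move=> f g fg; apply: eq_forallb => j.
case: (boolP (j \in neighbours v)) => [/fg -> //|].
by rewrite inE negb_or => /andP [/negbTE below /negbTE above]; rewrite /moves_away below above.
Qed.

Lemma neighbours_disjoint v w : (0 < v)%N -> (0 < w)%N -> v != w ->
  (v %% 4 < 2)%N = (w %% 4 < 2)%N -> [disjoint neighbours v & neighbours w].
Proof.
move=> v0 w0 /eqP vw cl; rewrite -setI_eq0; apply/eqP/setP => j; rewrite !inE.
by apply/negP => /andP [] /orP [] /eqP e1 /orP [] /eqP e2; move: cl; lia.
Qed.

Lemma card_moves_away v j : #|moves_away v j| =
  if level j == v.-1 then level j else if level j == v.+1 then (n - level j)%N else n.
Proof.
have v_neq : v.-1 != v.+1 by apply/eqP; lia.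
have ones_card : level j = #|[set i | P j i]| by [].
case: (eqVneq (level j) v.-1) => [lv|lv]; last case: (eqVneq (level j) v.+1) => [lv'|lv'].
- rewrite ones_card; apply: eq_card => i.
  by rewrite inE unfold_in /moves_away lv eqxx (negbTE v_neq) /= andbT.
- transitivity #|[predC [set i | P j i]]|.
    apply: eq_card => i; rewrite !inE unfold_in /moves_away lv' eqxx eq_sym (negbTE v_neq).
    by case: (P j i).
  by have := cardC [set i | P j i]; rewrite card_ord -ones_card; lia.
- rewrite -[RHS](card_ord n); apply: eq_card => i.
  by rewrite unfold_in /moves_away (negbTE lv) (negbTE lv').
Qed.

Lemma prob_avoids_ge (a M v : nat) : (a < v)%N -> (v + a < n)%N -> (#|neighbours v| <= M)%N ->
  (INR a / INR n) ^ M <= prob (avoids v).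
Proof.
move=> av van nbM; have n0 : (0 < n)%N by lia.
have an : (a <= n)%N by lia.
have b01 := ratio_bounds n0 an.
apply: (Rle_trans _ _ _ (pow_decr b01 nbM)).
rewrite -big_Rmult_const big_mkcond (prob_family _ (moves_away v)) /=; last by rewrite card_ord; lia.
apply: Rprod_le => j _; rewrite card_moves_away card_ord inE.
case: (eqVneq (level j) v.-1) => [lv|_]; first by apply: ratio_le; lia.
case: (eqVneq (level j) v.+1) => [lv|_]; first by apply: ratio_le; lia.
by rewrite /= /Rdiv Rinv_r; [lra | apply: not_0_INR; lia].
Qed.

Definition level_value (w : 'I_n.+1) : nat * nat := ((n - w)%N, w : nat).

Lemma card_occupied_le : (#|[set w : 'I_n.+1 | occupied w]| <= nfvals (pop_seq P))%N.
Proof.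
rewrite /nfvals cardE -(size_map level_value); apply: uniq_leq_size.
  by rewrite map_inj_uniq ?enum_uniq // => x y [_ /val_inj].
move=> x /mapP [w]; rewrite mem_enum inE => /existsP [j /eqP lj] ->.
rewrite mem_undup; apply/mapP; exists (P j); first by apply: map_f; rewrite mem_enum.
by rewrite /oneminmax /level_value -lj.
Qed.

Lemma nfvals_R_le (W : {set 'I_n.+1}) m :
  {in W, forall v : 'I_n.+1, [&& 0 < v, ~~ occupied v & avoids v m]%N} ->
  (nfvals_R P m <= n.+1 - #|W|)%N.
Proof.
move=> W_empty; have -> : (n.+1 - #|W| = #|~: W|)%N by have := cardsC W; rewrite card_ord; lia.
rewrite /nfvals_R /nfvals cardE -(size_map level_value); apply: uniq_leq_size.
  exact: undup_uniq.
move=> x; rewrite mem_undup => /mapP [y yR ->]; have yn := ones_le y.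
apply/mapP; exists (inord (ones y)); last by rewrite /level_value /oneminmax inordK.
rewrite mem_enum inE; apply/negP => /W_empty /and3P [v0 /existsPn unocc av].
move: yR; rewrite mem_cat => /orP [] /mapP [j _ yj]; subst y.
- by move: (unocc j); rewrite /level inordK // eqxx.
- by move: (offspring_avoids j v0 av); rewrite inordK // eqxx.
Qed.

Lemma sum_level_count_le (c : pred 'I_n.+1) (h : 'I_n.+1 -> nat) :
  {in c &, injective h} -> (\sum_(v | c v) level_count (h v) <= n.+1)%N.
Proof.
move=> h_inj; rewrite -[X in (_ <= X)%N](card_ord n.+1) -sum1_card.
under eq_bigr do rewrite /level_count -sum1_card big_mkcond /=.
rewrite exchange_big /=; apply: leq_sum => j _.
rewrite -big_mkcondr /= sum1_card; apply/card_le1_eqP => x y.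
move=> /andP [cx]; rewrite inE => /eqP lx /andP [cy]; rewrite inE => /eqP ly.
by apply: h_inj; rewrite ?unfold_in // -lx -ly.
Qed.

Definition crowded (M : nat) :=
  [set v : 'I_n.+1 | (0 < v)%N && (M < level_count v.-1 + level_count v.+1)%N].

Lemma card_crowded M : (#|crowded M| * M.+1 <= 2 * n.+1)%N.
Proof.
rewrite -sum_nat_const.
apply: (@leq_trans (\sum_(v in crowded M) (level_count v.-1 + level_count v.+1))%N).
  by apply: leq_sum => v; rewrite inE => /andP [].
apply: (@leq_trans (\sum_(v : 'I_n.+1 | (0 < v)%N) (level_count v.-1 + level_count v.+1))%N).
  rewrite big_mkcond [X in (_ <= X)%N]big_mkcond /=; apply: leq_sum => v _.
  by rewrite inE; case: (0 < v)%N; case: (M < _)%N.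
rewrite big_split /= mul2n -addnn; apply: leq_add; apply: sum_level_count_le => x y /=.
  by rewrite !unfold_in => x0 y0 e; apply: ord_inj; lia.
by move=> _ _ e; apply: ord_inj; lia.
Qed.

Lemma card_neighbours v : (#|neighbours v| <= level_count v.-1 + level_count v.+1)%N.
Proof.
have -> : neighbours v = [set j | level j == v.-1] :|: [set j | level j == v.+1].
  by apply/setP => j; rewrite !inE.
exact: leq_card_setU.
Qed.

Definition candidates (a M : nat) := [set v : 'I_n.+1 | [&& ~~ occupied v, a < v, v + a < n &
  level_count v.-1 + level_count v.+1 <= M]%N].

Lemma card_unoccupied (a M : nat) :
  (#|[set v : 'I_n.+1 | ~~ occupied v]| <= #|candidates a M| + 2 * a.+1 + #|crowded M|)%N.
Proof.
set low := [set v : 'I_n.+1 | (v <= a)%N]; set high := [set v : 'I_n.+1 | (n <= v + a)%N].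
have : [set v : 'I_n.+1 | ~~ occupied v] \subset candidates a M :|: low :|: high :|: crowded M.
  apply/subsetP => v; rewrite !inE => unocc; rewrite unocc /=.
  case: (leqP v a) => va; first by rewrite orbT.
  case: (leqP n (v + a)) => vb; first by rewrite orbT.
  have v0 : (0 < v)%N by apply: leq_ltn_trans va.
  by case: (leqP (level_count v.-1 + level_count v.+1) M) => //=; rewrite v0.
move/subset_leq_card => sub; apply: (leq_trans sub).
have := card_ord_le n a; have := card_ord_ge n a.
have := cardsU (candidates a M :|: low :|: high) (crowded M).
have := cardsU (candidates a M :|: low) high; have := cardsU (candidates a M) low.
rewrite -/low -/high; lia.
Qed.

Lemma exists_uniform_candidates (a M : nat) :
  exists V : {set 'I_n.+1}, [/\ V \subset candidates a M,
    {in V &, forall v w : 'I_n.+1, (v %% 4 < 2) = (w %% 4 < 2)}%N &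
    (n.+1 - nfvals (pop_seq P) <= 2 * #|V| + 2 * a.+1 + #|crowded M|)%N].
Proof.
have [V [VC CV Vclass]] := exists_half_uniform (candidates a M) (fun v : 'I_n.+1 => v %% 4 < 2)%N.
exists V; split => //.
have unocc : (n.+1 - nfvals (pop_seq P) <= #|[set v : 'I_n.+1 | ~~ occupied v]|)%N.
  have compl : ~: [set w : 'I_n.+1 | occupied w] = [set v : 'I_n.+1 | ~~ occupied v].
    by apply/setP => v; rewrite !inE.
  have := card_occupied_le; have := cardsC [set w : 'I_n.+1 | occupied w].
  by rewrite compl card_ord; lia.
(* [set] unifies the two occurrences of [#|V|], which differ in their finType instance. *)
by have := card_unoccupied a M; set cV := #|V|; lia.
Qed.

Lemma prob_nfvals_R_gt_pow (a M k : nat) (V : {set 'I_n.+1}) :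
  (0 < n)%N -> V \subset candidates a M ->
  {in V &, forall v w : 'I_n.+1, (v %% 4 < 2) = (w %% 4 < 2)}%N ->
  prob (fun m => n.+1 - k < nfvals_R P m)%N <= 2 ^ k * (1 - (INR a / INR n) ^ M / 2) ^ #|V|.
Proof.
move=> n0 VC Vclass; have In_gt0 : (0 < #|'I_n|)%N by rewrite card_ord.
have V_cand v : v \in V -> [&& ~~ occupied v, a < v, v + a < n &
    level_count v.-1 + level_count v.+1 <= M]%N.
  by move/(subsetP VC); rewrite inE.
apply: (Rle_trans _ (prob (fun m => #|[set v in V | avoids v m]| < k)%N)).
  apply: prob_le => [|m]; first exact: card_ffun_gt0.
  apply: contraTT; rewrite -!leqNgt => many.
  apply: leq_trans (nfvals_R_le (W := [set v in V | avoids v m]) _) _; last exact: leq_sub2l.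
  move=> v; rewrite inE => /andP [/V_cand /and4P [unocc av _ _] avm]; rewrite unocc avm !andbT.
  exact: leq_ltn_trans av.
have dis : {in V &, forall v w : 'I_n.+1, v != w -> [disjoint neighbours v & neighbours w]}.
  move=> v w vV wV; have := V_cand v vV; have := V_cand w wV.
  case/and4P => _ aw _ _ /and4P [_ av _ _] vw.
  by apply: neighbours_disjoint => //; [lia | lia | exact: Vclass].
have pA : {in V, forall v : 'I_n.+1, (INR a / INR n) ^ M <= prob (avoids v)}.
  move=> v /V_cand /and4P [_ av van lcM]; apply: prob_avoids_ge => //.
  exact: leq_trans (card_neighbours v) lcM.
by apply: (Rle_trans _ _ _ (prob_few_events In_gt0 k (fun v : 'I_n.+1 => @avoids_depends v) dis pA)); right.
Qed.

Lemma prob_nfvals_R_gt (a M k : nat) : (0 < n)%N -> (a <= n)%N ->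
  prob (fun m => n.+1 - k < nfvals_R P m)%N <=
  exp (INR k - (INR a / INR n) ^ M / 4 *
       (INR n.+1 - INR (nfvals (pop_seq P)) - 2 * INR a.+1 - 2 * INR n.+1 / INR M.+1)).
Proof.
move=> n0 an; have [V [VC Vclass count]] := exists_uniform_candidates a M.
apply: (Rle_trans _ _ _ (prob_nfvals_R_gt_pow k n0 VC Vclass)).
have p01 : 0 <= (INR a / INR n) ^ M / 2 <= 1.
  have b01 := ratio_bounds n0 an.
  by have := pow_le _ M (proj1 b01); have := pow_incr _ 1 M b01; rewrite pow1; lra.
apply: (Rle_trans _ _ _ (pow2_pow_le_exp k #|V| p01)); apply: exp_le.
move/leP/le_INR: count; rewrite 2!plus_INR 2!INR_muln (_ : INR 2 = 2) // => count.
have crowd : INR #|crowded M| <= 2 * INR n.+1 / INR M.+1.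
  have M0 : 0 < INR M.+1 by apply/lt_0_INR/ltP.
  apply: (Rmult_le_reg_r (INR M.+1)) => //; rewrite /Rdiv Rmult_assoc Rinv_l ?Rmult_1_r; last lra.
  by have /leP/le_INR := card_crowded M; rewrite !INR_muln.
by have := INR_subn_ge n.+1 (nfvals (pop_seq P)); move: count crowd p01; nra.
Qed.

End Population.

Section Constants.
Variables (eps : R) (n : nat).
Hypothesis eps_bounds : 0 < eps < 1 / 10.

(* Candidate levels lie more than [margin] away from [0] and [n], so each neighbour
   flips a suitable bit with probability at least [margin / n]; they have at most [nb_max]
   neighbours, and by the choice of [nb_max] at most [2 eps (n + 1) / 5] levels have more. *)
Definition nb_max := floorn (5 / eps).

Definition rate := Rpower (eps / 10) (5 / eps).

Definition margin := floorn (eps * INR n / 4).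

Definition decay := Rpower (eps / 5 - 2 / INR n) (5 / eps).

Definition lost := (floorn (eps / 10 * decay * INR n.+1)).+1.

Hypothesis n_large : 100 <= eps * rate * INR n.

Lemma five_div_eps : 0 <= 5 / eps.
Proof. by apply: Rlt_le; apply: Rdiv_lt_0_compat; lra. Qed.

Lemma nb_max_bounds : 28 <= INR nb_max <= 5 / eps.
Proof.
have := floorn_spec five_div_eps.
have : 50 < 5 / eps.
  apply: (Rmult_lt_reg_r eps); first lra.
  rewrite /Rdiv Rmult_assoc Rinv_l; lra.
rewrite /nb_max; lra.
Qed.

Lemma rate_bounds : 0 < rate <= 1.
Proof.
split; first exact: exp_pos.
have := nb_max_bounds; have := pos_INR nb_max => ? ?.
by have := Rpower_le_pow (m := 0) (q := eps / 10) (y := 5 / eps) ltac:(lra) ltac:(simpl; lra).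
Qed.

Lemma eps_n_large : 100 <= eps * INR n.
Proof.
have [_ rate1] := rate_bounds.
have en : 0 <= eps * INR n by apply: Rmult_le_pos; [lra | apply: pos_INR].
by have := Rmult_le_compat_l _ _ _ en rate1; lra.
Qed.

Lemma n_pos : 0 < INR n.
Proof. by have := eps_n_large; nra. Qed.

Lemma base_bounds : eps / 10 <= eps / 5 - 2 / INR n < 1.
Proof.
have := eps_n_large; have := n_pos => n0 en.
have : 2 / INR n <= eps / 10.
  apply: (Rmult_le_reg_r (INR n)) => //; rewrite /Rdiv Rmult_assoc Rinv_l; nra.
have : 0 < 2 / INR n by apply: Rdiv_lt_0_compat; lra.
lra.
Qed.

Lemma decay_bounds : rate <= decay <= 1.
Proof.
have := base_bounds; have := nb_max_bounds; have := pos_INR nb_max => ? ? ?.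
have e10 : 0 < eps / 10 by lra.
split; first exact: (Rle_Rpower_l _ _ _ five_div_eps (conj e10 (proj1 base_bounds))).
by have := Rpower_le_pow (m := 0) (q := eps / 5 - 2 / INR n) (y := 5 / eps) ltac:(lra) ltac:(simpl; lra).
Qed.

Lemma pow_ratio_ge_decay : 8 * decay <= (INR margin / INR n) ^ nb_max.
Proof.
have := base_bounds; have := nb_max_bounds; have n0 := n_pos.
set q := eps / 5 - 2 / INR n => M_bounds q_bounds.
have q_le : 5 / 4 * q <= INR margin / INR n.
  have := floorn_spec (x := eps * INR n / 4) ltac:(have := eps_n_large; lra).
  rewrite -/margin => m_bounds.
  have : 5 / 4 * q * INR n = eps * INR n / 4 - 5 / 2 by rewrite /q; field; lra.
  have : INR margin / INR n * INR n = INR margin by field; lra.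
  by move=> ? ?; apply: (Rmult_le_reg_r (INR n)) => //; lra.
have q0 : 0 <= 5 / 4 * q by lra.
have := pow_incr _ _ nb_max (conj q0 q_le); rewrite Rpow_mult_distr.
have := bernoulli_ineq nb_max (x := 1 / 4) ltac:(lra); rewrite (_ : 1 + 1 / 4 = 5 / 4); last lra.
have := Rpower_le_pow (q := q) (y := 5 / eps) (m := nb_max) ltac:(lra) ltac:(lra).
have := pow_le q nb_max ltac:(lra); rewrite -/decay; nra.
Qed.

Lemma margin_le : (margin <= n)%N.
Proof.
have := eps_n_large; have := pos_INR n => ? ?.
have [m_le _] := floorn_spec (x := eps * INR n / 4) ltac:(lra).
by apply/leP/INR_le; rewrite /margin; nra.
Qed.

Lemma tail_exponent_le (nf : nat) : INR nf <= (1 - eps) * INR n.+1 ->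
  INR lost - (INR margin / INR n) ^ nb_max / 4 *
    (INR n.+1 - INR nf - 2 * INR margin.+1 - 2 * INR n.+1 / INR nb_max.+1)
  <= - (eps * rate / 20 * INR n).
Proof.
move=> nf_small; have en := eps_n_large; have [rate0 _] := rate_bounds.
have [rate_decay decay1] := decay_bounds; have p8 := pow_ratio_ge_decay.
set p := (INR margin / INR n) ^ nb_max in p8 *.
have margin_small : INR margin <= eps * INR n / 4.
  by have := floorn_spec (x := eps * INR n / 4) ltac:(lra); rewrite -/margin; lra.
have crowd_le : 2 * INR n.+1 / INR nb_max.+1 <= 2 * eps * INR n.+1 / 5.
  have := floorn_spec five_div_eps; rewrite -/nb_max -S_INR => [[_ M_gt]].
  have M0 : 0 < INR nb_max.+1 by apply/lt_0_INR/ltP.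
  apply: (Rmult_le_reg_r (INR nb_max.+1)) => //.
  rewrite (_ : 2 * INR n.+1 / INR nb_max.+1 * INR nb_max.+1 = 2 * INR n.+1); last by field; lra.
  have : eps * (5 / eps) = 5 by field; lra.
  move=> e5; have : 5 <= eps * INR nb_max.+1 by nra.
  have := pos_INR n.+1; nra.
have lost_le : INR lost <= eps / 10 * decay * INR n.+1 + 1.
  have : 0 <= eps / 10 * decay * INR n.+1.
    by apply: Rmult_le_pos; [apply: Rmult_le_pos|apply: pos_INR]; lra.
  by move/floorn_spec => fl; rewrite /lost S_INR; lra.
set G := _ - _ - 2 * INR n.+1 / _.
have G_ge : eps * INR n.+1 / 10 - 2 <= G.
  by rewrite /G S_INR in nf_small crowd_le *; rewrite S_INR; lra.
have G0 : 0 <= eps * INR n.+1 / 10 - 2 by rewrite S_INR; lra.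
have : 2 * decay * (eps * INR n.+1 / 10 - 2) <= p / 4 * G by nra.
have : eps * rate * INR n <= eps * decay * INR n.+1 by rewrite S_INR; nra.
nra.
Qed.

Lemma nfvals_le_of_lost (m : nat) :
  (m <= n.+1 - lost)%N -> INR m <= (1 - eps / 10 * decay) * INR n.+1.
Proof.
move=> m_le; have [rate_decay decay1] := decay_bounds; have [rate0 _] := rate_bounds.
have d_pos : 0 <= eps / 10 * decay * INR n.+1.
  by apply: Rmult_le_pos; [apply: Rmult_le_pos|apply: pos_INR]; lra.
have lost_ge : eps / 10 * decay * INR n.+1 <= INR lost.
  by have := floorn_spec d_pos; rewrite /lost (S_INR (floorn _)); lra.
apply: (Rle_trans _ (INR (n.+1 - lost))); first exact/le_INR/leP.
case: (leqP lost n.+1) => [lost_le | /ltnW lost_gt].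
  by rewrite minus_INR; [lra | apply/leP].
have -> : (n.+1 - lost)%N = 0%N by apply/eqP; rewrite subn_eq0.
apply: Rmult_le_pos; [nra | apply: pos_INR].
Qed.

End Constants.

Theorem lemma10 :
  exists eps0 : R, 0 < eps0 < 1 /\
  forall eps : R, 0 < eps < eps0 ->
  exists c : R, 0 < c /\
  exists n0 : nat, forall n : nat, (n0 <= n)%nat ->
  forall P : population n,
    INR (nfvals (pop_seq P)) <= (1 - eps) * INR (n.+1) ->
    prob (fun m : mutchoice n =>
        Rleb (INR (nfvals_R P m))
             ((1 - eps / 10 * Rpower (eps / 5 - 2 / INR n) (5 / eps)) * INR (n.+1)))
     >= 1 - exp (- (c * INR n)).
Proof.
exists (1 / 10); split; first lra.
move=> eps eps_bounds; have [rate0 _] := rate_bounds eps_bounds.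
have c0 : 0 < eps * rate eps / 20 by apply: Rmult_lt_0_compat; [apply: Rmult_lt_0_compat|]; lra.
exists (eps * rate eps / 20); split => //.
have [N n_large] := eventually_le_mul 100 (ltac:(apply: Rmult_lt_0_compat; lra) : 0 < eps * rate eps).
exists N => n /n_large large P nf_small; apply: Rle_ge.
have n0 : (0 < n)%N by apply/ltP/INR_lt; exact: n_pos eps_bounds large.
apply: (Rle_trans _ _ _ _ (prob_ge_compl _ (B := fun m => n.+1 - lost eps n < nfvals_R P m)%N _)).
- apply/Rplus_le_compat_l/Ropp_le_contravar.
  apply: (Rle_trans _ _ _ (prob_nfvals_R_gt P (a := margin eps n) (nb_max eps) (lost eps n) _ _)).
  + exact: n0.
  + exact: margin_le.
  + by apply: exp_le; apply: tail_exponent_le.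
- by apply: card_ffun_gt0; rewrite card_ord.
- by move=> m; rewrite -leqNgt => m_le; apply/Rleb_true/nfvals_le_of_lost.
Qed.
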